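(* Let $G$ be a complete geometric graph on $n$ vertices. Then every blocker for $\mathcal{T}_{\leq 3}(G)$ has exactly $n-1$ edges.
   Context: A geometric graph is a graph whose vertices are points in the plane in general position (no three collinear) and whose edges are straight segments between pairs of vertices; $G$ is complete if all pairs of vertices are joined. $\mathcal{T}_{\leq k}(G)$ denotes the family of all simple (non-crossing) spanning trees of $G$ of (graph) diameter at most $k$. A subgraph $B$ blocks a family $\mathcal{F}$ of subgraphs if it shares at least one edge with every member of $\mathcal{F}$; a blocker of $\mathcal{F}$ is a subgraph that blocks $\mathcal{F}$ and has the smallest possible number of edges among all subgraphs blocking $\mathcal{F}$. *)

From mathcomp Require Import all_boot all_order all_algebra.
Set Implicit Arguments. Unset Strict Implicit. Unset Printing Implicit Defensive.
Import Order.TTheory GRing.Theory Num.Theory.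
Local Open Scope ring_scope.

Section Geo.
Variable R : realFieldType.

Definition orient (a b c : R * R) : R :=
  (b.1 - a.1) * (c.2 - a.2) - (b.2 - a.2) * (c.1 - a.1).

Definition general_position (n : nat) (p : 'I_n -> R * R) : Prop :=
  forall i j k : 'I_n, i != j -> j != k -> i != k ->
    orient (p i) (p j) (p k) != 0.

Definition on_seg (a b x : R * R) : Prop :=
  exists t : R, 0 <= t <= 1 /\
    x = (a.1 + t * (b.1 - a.1), a.2 + t * (b.2 - a.2)).

Definition on_edge (n : nat) (p : 'I_n -> R * R) (e : {set 'I_n}) (x : R * R)
  : Prop :=
  exists u v : 'I_n, u != v /\ e = [set u; v] /\ on_seg (p u) (p v) x.

Definition cross (n : nat) (p : 'I_n -> R * R) (e f : {set 'I_n}) : Prop :=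
  exists x : R * R, on_edge p e x /\ on_edge p f x /\
    ~ (exists v : 'I_n, v \in e /\ v \in f /\ x = p v).

Definition simple_geo (n : nat) (p : 'I_n -> R * R) (T : {set {set 'I_n}})
  : Prop :=
  forall e f, e \in T -> f \in T -> e != f -> ~ cross p e f.
End Geo.

Definition complete_edges (n : nat) : {set {set 'I_n}} :=
  [set e : {set 'I_n} | #|e| == 2%N].

Definition adj (n : nat) (T : {set {set 'I_n}}) : rel 'I_n :=
  fun u v => [set u; v] \in T.

Definition dist_le (n : nat) (T : {set {set 'I_n}}) (k : nat) (u v : 'I_n)
  : Prop :=
  exists s : seq 'I_n, (size s <= k)%N /\ path (adj T) u s /\ last u s = v.

Definition connected_graph (n : nat) (T : {set {set 'I_n}}) : Prop :=
  forall u v : 'I_n, exists s : seq 'I_n, path (adj T) u s /\ last u s = v.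

Definition acyclic (n : nat) (T : {set {set 'I_n}}) : Prop :=
  forall c : seq 'I_n, uniq c -> (3 <= size c)%N -> ~~ cycle (adj T) c.

Definition spanning_tree (n : nat) (T : {set {set 'I_n}}) : Prop :=
  T \subset complete_edges n /\ connected_graph T /\ acyclic T.

(* The family T_{<= k}(G): simple spanning trees of diameter at most k. *)
Definition simple_trees_diam_le (R : realFieldType) (n : nat)
  (p : 'I_n -> R * R) (k : nat) (T : {set {set 'I_n}}) : Prop :=
  spanning_tree T /\ simple_geo p T /\ (forall u v, dist_le T k u v).

Definition blocks (n : nat) (F : {set {set 'I_n}} -> Prop)
  (B : {set {set 'I_n}}) : Prop :=
  forall T, F T -> exists e, e \in B /\ e \in T.

Definition blocker (n : nat) (F : {set {set 'I_n}} -> Prop)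
  (B : {set {set 'I_n}}) : Prop :=
  B \subset complete_edges n /\ blocks F B /\
  forall B' : {set {set 'I_n}}, B' \subset complete_edges n -> blocks F B' -> (#|B| <= #|B'|)%N.

From mathcomp Require Import all_boot all_order all_algebra.
From mathcomp Require Import ring lra zify.
Set Implicit Arguments. Unset Strict Implicit. Unset Printing Implicit Defensive.
Import Order.TTheory GRing.Theory Num.Theory.

(* The star at any vertex meets every spanning tree, so a blocker has at most
   n - 1 edges.  Conversely, let B have fewer than n - 1 edges.  Some vertex u
   has B-degree at most 1.  If it is 0, the star at u avoids B.  If the only
   B-edge at u is ua, then for each other c consider the double star joining
   u to c, c to the vertices of the wedge at u between the rays towards a and
   c, and u to all remaining vertices.  It is non-crossing, has diameter 3,
   and avoids B unless B contains an edge from c into its wedge.  If that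
   happened for every c, these n - 2 edges would be distinct (c' in the
   wedge of c and c in the wedge of c' contradict each other on the
   orientations of (u, a, c), (u, a, c') and (u, c, c')), and together with
   ua they would give B at least n - 1 edges. *)

Section Orientation.
Variable R : realFieldType.
Implicit Types A C M Q S U W X : R * R.
Local Open Scope ring_scope.

Lemma on_seg_orient A C X : on_seg A C X -> exists t : R, 0 <= t <= 1 /\
  (forall Q S, orient Q S X = (1 - t) * orient Q S A + t * orient Q S C) /\
  (t = 0 -> X = A).
Proof.
case=> t [ht ->]; exists t; split=> //; split.
  by move=> Q S; rewrite /orient /=; ring.
by move=> ->; case: A => a1 a2 /=; rewrite !mul0r !addr0.
Qed.

Lemma orient_eq13 Q S : orient Q S Q = 0.
Proof. by rewrite /orient; ring. Qed.

Lemma orient_eq23 Q S : orient Q S S = 0.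
Proof. by rewrite /orient; ring. Qed.

Lemma orientC23 Q S X : orient Q X S = - orient Q S X.
Proof. by rewrite /orient; ring. Qed.

Lemma on_seg_sym A C X : on_seg A C X -> on_seg C A X.
Proof.
case=> t [/andP[t0 t1] ->]; exists (1 - t); split.
  by apply/andP; split; lra.
by congr (_, _); ring.
Qed.

Lemma on_seg_apex M Q1 Q2 X : orient M Q1 Q2 != 0 ->
  on_seg M Q1 X -> on_seg M Q2 X -> X = M.
Proof.
move=> hO /on_seg_orient [t [_ [h1 _]]] /on_seg_orient [s [_ [h2 h0]]].
apply: h0; have := h1 M Q1; rewrite h2 orient_eq13 orient_eq23 !mulr0 !add0r.
by move=> /eqP; rewrite mulf_eq0 (negbTE hO) orbF => /eqP.
Qed.

(* With sg the orientation sign of the angle AUC, [C, W] lies in the closed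
   wedge between the rays UA and UC, while [U, W'] leaves U outside it. *)
Lemma wedge_segs_disjoint U A C W W' X (sg : R) :
  orient C W U != 0 -> 0 < sg * orient U A C ->
  0 <= sg * orient U A W -> sg * orient U C W < 0 ->
  sg * orient U A W' < 0 \/ 0 < sg * orient U C W' ->
  on_seg C W X -> on_seg U W' X -> False.
Proof.
move=> hO hAC hAW hCW hW' /on_seg_orient [s [/andP[s0 s1] [h1 _]]]
  /on_seg_orient [t [/andP[t0 t1] [h2 _]]].
have tp : 0 < t.
  rewrite lt_neqAle t0 andbT; apply: contraNneq hO => t00.
  have := h1 C W; rewrite h2 -t00 orient_eq13 orient_eq23.
  by rewrite !mulr0 mul0r !addr0 subr0 mul1r => ->.
have hX Q : orient U Q X = t * orient U Q W' by rewrite h2 orient_eq13; ring.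
case: hW' => hW'.
- have : sg * orient U A X < 0 by rewrite hX mulrCA pmulr_rlt0.
  rewrite h1 mulrDr mulrCA [X in _ + X]mulrCA; apply/negP; rewrite -leNgt.
  by apply: addr_ge0; apply: mulr_ge0 => //; [rewrite subr_ge0 | exact: ltW].
- have : 0 < sg * orient U C X by rewrite hX mulrCA mulr_gt0.
  rewrite h1 orient_eq23 mulr0 add0r mulrCA; apply/negP; rewrite -leNgt.
  by rewrite mulr_ge0_le0 // ltW.
Qed.
End Orientation.

Lemma eq_set2 (T : finType) (u v P Q : T) :
  [set u; v] = [set P; Q] -> (u = P /\ v = Q) \/ (u = Q /\ v = P).
Proof.
move=> he; have hP : P \in [set u; v] by rewrite he set21.
have hQ : Q \in [set u; v] by rewrite he set22.
have hu : u \in [set P; Q] by rewrite -he set21.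
have hv : v \in [set P; Q] by rewrite -he set22.
by case/set2P: hu => hu; case/set2P: hv => hv; subst; auto;
  [case/set2P: hQ | case/set2P: hP] => ->; auto.
Qed.

Lemma on_edge_set2 (R : realFieldType) n (p : 'I_n -> R * R) P Q x :
  on_edge p [set P; Q] x -> on_seg (p P) (p Q) x.
Proof.
case=> a [b [_ [/eq_set2 [[-> ->]|[-> ->]] //]]]; exact: on_seg_sym.
Qed.

Section Distance.
Variables (n : nat) (T : {set {set 'I_n}}).

Lemma adjC x y : adj T x y = adj T y x.
Proof. by rewrite /adj setUC. Qed.

Lemma dist_le_refl k x : dist_le T k x x.
Proof. by exists [::]. Qed.

Lemma dist_le_adj x y : adj T x y -> dist_le T 1 x y.
Proof. by move=> h; exists [:: y]; rewrite /= h. Qed.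

Lemma dist_le_trans k1 k2 x y z : dist_le T k1 x y -> dist_le T k2 y z ->
  dist_le T (k1 + k2) x z.
Proof.
case=> s1 [h1 [p1 l1]] [s2 [h2 [p2 l2]]]; exists (s1 ++ s2).
by rewrite size_cat leq_add // cat_path p1 last_cat l1 p2 l2.
Qed.

Lemma dist_le_connected k : (forall x y, dist_le T k x y) -> connected_graph T.
Proof. by move=> h x y; case: (h x y) => s [_ hs]; exists s. Qed.
End Distance.

Section DoubleStar.
Variables (R : realFieldType) (n : nat) (p : 'I_n -> R * R).
Variables (u c : 'I_n) (K : {set 'I_n}).
Hypotheses (uc : u != c) (cK : c \notin K).

Definition parent z := if z \in K then c else u.

Definition double_star : {set {set 'I_n}} :=
  [set [set z; parent z] | z in [set~ u]].

Lemma parent_cases z : parent z = u \/ parent z = c.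
Proof. by rewrite /parent; case: ifP; auto. Qed.

Lemma parent_neq z : z != u -> parent z != z.
Proof.
rewrite /parent; case: ifP => hz hzu; last by rewrite eq_sym.
by apply: contraNneq cK => ->.
Qed.

Lemma double_starP e :
  reflect (exists2 z, z != u & e = [set z; parent z]) (e \in double_star).
Proof.
by apply: (iffP imsetP) => -[z hz ->]; exists z; rewrite // -in_setC1 in hz *.
Qed.

Lemma adj_parent z : z != u -> adj double_star z (parent z).
Proof. by move=> hz; apply/double_starP; exists z. Qed.

Lemma adj_leaf x y : x != u -> x != c -> adj double_star x y -> y = parent x.
Proof.
move=> xu xc /double_starP [z zu /eq_set2 [[-> ->]|[hx hy]]] //.
by case: (parent_cases z) => h; move: xu xc; rewrite hx h eqxx.
Qed.

Definition hub x := if x == u then u else parent x.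

Lemma hub_cases x : hub x = u \/ hub x = c.
Proof. rewrite /hub; case: ifP => _; [by left | exact: parent_cases]. Qed.

Lemma dist_le_hub x : dist_le double_star 1 x (hub x) /\ dist_le double_star 1 (hub x) x.
Proof.
rewrite /hub; case: eqP => [->|/eqP xu]; first by split; apply: dist_le_refl.
by split; apply: dist_le_adj; rewrite ?[adj _ (parent x) x]adjC adj_parent.
Qed.

Lemma dist_le_hubs x y : dist_le double_star 1 (hub x) (hub y).
Proof.
have ucE : adj double_star c u.
  by have := @adj_parent c; rewrite /parent (negbTE cK) eq_sym; apply.
by case: (hub_cases x) => ->; case: (hub_cases y) => ->;
  try exact: dist_le_refl; apply: dist_le_adj; rewrite // adjC.
Qed.

Lemma double_star_diam x y : dist_le double_star 3 x y.
Proof.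
have [hx _] := dist_le_hub x; have [_ hy] := dist_le_hub y.
exact: dist_le_trans (dist_le_trans hx (dist_le_hubs x y)) hy.
Qed.

Lemma double_star_sub : double_star \subset complete_edges n.
Proof.
apply/subsetP => e /double_starP [z zu ->].
by rewrite inE cards2 (eq_sym z) parent_neq.
Qed.

(* A vertex other than u and c is a leaf, so it cannot lie on a cycle. *)
Lemma double_star_acyclic : acyclic double_star.
Proof.
move=> cy ucy scy; apply/negP => ccy.
have [x xcy] : exists2 x, x \in cy & x \notin [:: u; c].
  apply/exists_inP; apply: contraTT scy => /exists_inPn h.
  rewrite -ltnNge ltnS; apply: (uniq_leq_size (s2 := [:: u; c]) ucy) => y /h.
  by case: (y \in [:: u; c]).
rewrite !inE negb_or => /andP[xu xc].
case: (rot_to xcy) => i s hs.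
move: ccy ucy scy; rewrite -(rot_cycle i) -(rot_uniq i) -(size_rot i) hs.
case: s hs => [|y [|y2 s]] hs //=.
move=> /and3P[hxy _]; rewrite rcons_path => /andP[_ hl].
case/and4P=> _ yns _ _ _.
rewrite adjC in hl; move: yns.
by rewrite (adj_leaf xu xc hxy) -(adj_leaf xu xc hl) mem_last.
Qed.

Hypothesis gp : general_position p.
Hypothesis K_separated : forall w w' x, w \in K -> w' \notin K ->
  w' != u -> w' != c -> on_seg (p c) (p w) x -> on_seg (p u) (p w') x -> False.

Lemma double_star_edges_meet z1 z2 x : z1 != z2 -> z1 != u -> z2 != u ->
  on_seg (p z1) (p (parent z1)) x -> on_seg (p z2) (p (parent z2)) x ->
  exists v, v \in [set z1; parent z1] /\ v \in [set z2; parent z2] /\ x = p v.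
Proof.
move=> z12 z1u z2u /on_seg_sym + /on_seg_sym; rewrite /parent.
have cu : c != u by rewrite eq_sym.
case: (boolP (z1 \in K)) => k1; case: (boolP (z2 \in K)) => k2 s1 s2.
- have cz1 : c != z1 by apply: contraNneq cK => ->.
  have cz2 : c != z2 by apply: contraNneq cK => ->.
  by exists c; rewrite !set22; do 2!split=> //; exact: on_seg_apex (gp cz1 z12 cz2) s1 s2.
- have cz1 : c != z1 by apply: contraNneq cK => ->.
  case: (eqVneq z2 c) => [ez|z2c]; last by case: (K_separated k1 k2 z2u z2c s1 s2).
  subst z2; exists c; rewrite set22 set21; do 2!split=> //.
  by apply: on_seg_apex (gp cz1 z1u cu) s1 (on_seg_sym s2).
- have cz2 : c != z2 by apply: contraNneq cK => ->.
  case: (eqVneq z1 c) => [ez|z1c]; last by case: (K_separated k2 k1 z1u z1c s2 s1).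
  subst z1; exists c; rewrite set22 set21; do 2!split=> //.
  by apply: on_seg_apex (gp cz2 z2u cu) s2 (on_seg_sym s1).
- have uz1 : u != z1 by rewrite eq_sym.
  have uz2 : u != z2 by rewrite eq_sym.
  by exists u; rewrite !set22; do 2!split=> //; exact: on_seg_apex (gp uz1 z12 uz2) s1 s2.
Qed.

Lemma double_star_simple : simple_geo p double_star.
Proof.
move=> e f /double_starP [z1 z1u ->] /double_starP [z2 z2u ->] ne [x [he [hf hn]]].
apply: hn; apply: double_star_edges_meet (on_edge_set2 he) (on_edge_set2 hf) => //.
by apply: contraNneq ne => ->.
Qed.

Lemma double_star_tree : simple_trees_diam_le p 3 double_star.
Proof.
split; last by split; [exact: double_star_simple | exact: double_star_diam].
split; first exact: double_star_sub.
by split; [exact: dist_le_connected double_star_diam | exact: double_star_acyclic].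
Qed.
End DoubleStar.

Lemma sum_degree n (B : {set {set 'I_n}}) : B \subset complete_edges n ->
  (\sum_(u : 'I_n) #|[set e in B | u \in e]| = 2 * #|B|)%N.
Proof.
move=> hB.
have deg u : #|[set e in B | u \in e]| = (\sum_(e in B) (u \in e))%N.
  rewrite -sum1_card big_mkcond [RHS]big_mkcond; apply: eq_bigr => e _.
  by rewrite !inE; case: (e \in B); case: (u \in e).
rewrite (eq_bigr _ (fun u _ => deg u)) exchange_big /=.
rewrite (eq_bigr (fun _ => 2)) ?sum_nat_const 1?mulnC // => e eB.
have := subsetP hB e eB; rewrite inE => /eqP <-.
by rewrite -sum1_card [RHS]big_mkcond; apply: eq_bigr => u _; case: (u \in e).
Qed.

Lemma exists_low_degree n (B : {set {set 'I_n}}) : B \subset complete_edges n ->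
  (#|B| < n)%N -> exists u : 'I_n, (#|[set e in B | u \in e]| <= 1)%N.
Proof.
move=> hB hn; apply/existsP; apply: contraTT hn; rewrite negb_exists => /forallP h.
rewrite -leqNgt -(leq_pmul2l (isT : (0 < 2)%N)) -sum_degree //.
rewrite mulnC -{1}[n]card_ord -sum_nat_const leq_sum // => u _.
by rewrite ltnNge h.
Qed.

Lemma exists_other_vertex n (u : 'I_n) : (1 < n)%N -> exists c : 'I_n, c != u.
Proof.
move=> n2; have : (0 < #|[set~ u]|)%N by rewrite cardsC1 card_ord -ltnS prednK // ltnW.
by case/card_gt0P => c hc; exists c; rewrite -in_setC1.
Qed.

Section AvoidingTree.
Variables (R : realFieldType) (n : nat) (p : 'I_n -> R * R).
Hypothesis gp : general_position p.
Variable B : {set {set 'I_n}}.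
Hypothesis n2 : (1 < n)%N.
Local Open Scope ring_scope.

Definition avoids (T : {set {set 'I_n}}) := forall e, e \in T -> e \notin B.

Lemma avoiding_star u : [set e in B | u \in e] = set0 ->
  exists2 T, simple_trees_diam_le p 3 T & avoids T.
Proof.
move=> h0; have [c cu] := exists_other_vertex u n2.
have uc : u != c by rewrite eq_sym.
exists (double_star u c set0).
  by apply: double_star_tree; rewrite ?inE // => w w' x; rewrite inE.
move=> e /double_starP [z zu ->]; rewrite /parent inE; apply/negP => hz.
have : [set z; u] \in [set e in B | u \in e] by rewrite inE hz set22.
by rewrite h0 inE.
Qed.

Section Degree1.
Variables (u a : 'I_n).
Hypotheses (ua : u != a) (uaB : [set u; a] \in B)
  (uonly : forall e, e \in B -> u \in e -> e = [set u; a]).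

Local Notation ori i j k := (orient (p i) (p j) (p k)).

Definition side (c : 'I_n) : R := if 0 < ori u a c then 1 else -1.

(* The vertices w other than u and c inside the wedge at u between the rays
   towards a and c, a included. *)
Definition wedge c : {set 'I_n} := [set w | (w != u) && (w != c) &&
  ((w == a) || ((0 < side c * ori u a w) && (0 < side c * ori u w c)))].

Lemma side_sign c : side c = 1 \/ side c = -1.
Proof. by rewrite /side; case: ifP; auto. Qed.

Lemma side_orient_neq0 c i j k : i != j -> j != k -> i != k ->
  side c * ori i j k != 0.
Proof.
move=> ij jk ik; rewrite mulf_neq0 ?gp //.
by case: (side_sign c) => ->; rewrite ?oppr_eq0 oner_eq0.
Qed.

Lemma side_gt0 c : c != u -> c != a -> 0 < side c * ori u a c.
Proof.
move=> cu ca; have hO : ori u a c != 0 by apply: gp; rewrite // eq_sym.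
rewrite /side; case: ifP => h; first by rewrite mul1r.
by rewrite mulN1r oppr_gt0 lt_neqAle hO /= leNgt h.
Qed.

Lemma a_in_wedge c : c != u -> c != a -> a \in wedge c.
Proof. by move=> cu ca; rewrite inE eq_sym ua eq_sym ca eqxx. Qed.

Lemma wedge_separated c : c != u -> c != a ->
  forall w w' x, w \in wedge c -> w' \notin wedge c -> w' != u -> w' != c ->
  on_seg (p c) (p w) x -> on_seg (p u) (p w') x -> False.
Proof.
move=> cu ca w w' x; rewrite inE => /andP[/andP[wu wc] hw] w'K w'u w'c.
have w'a : w' != a by apply: contraNneq w'K => ->; exact: a_in_wedge.
have hcw : orient (p c) (p w) (p u) != 0 by apply: gp; rewrite // eq_sym.
apply: (wedge_segs_disjoint hcw (side_gt0 cu ca)).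
- case/orP: hw => [/eqP ->|/andP[h _]]; last exact: ltW.
  by rewrite orient_eq23 mulr0.
- by rewrite orientC23 mulrN oppr_lt0; case/orP: hw => [/eqP ->|/andP[_ ->]];
    [exact: side_gt0 | ].
- have uw' : u != w' by rewrite eq_sym.
  have uc : u != c by rewrite eq_sym.
  have aw' : a != w' by rewrite eq_sym.
  have h1 := side_orient_neq0 c ua aw' uw'.
  case: (ltrgtP (side c * ori u a w') 0) => h2; [by left | | by rewrite h2 eqxx in h1].
  right; move: w'K; rewrite inE w'u w'c /= (negbTE w'a) h2 /= -leNgt => h3.
  have h4 := side_orient_neq0 c uw' w'c uc.
  by rewrite orientC23 mulrN oppr_gt0 lt_neqAle h4 h3.
Qed.

Lemma avoiding_wedge_star c : c != u -> c != a ->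
  (forall w, w \in wedge c -> [set c; w] \notin B) ->
  exists2 T, simple_trees_diam_le p 3 T & avoids T.
Proof.
move=> cu ca hw; have uc : u != c by rewrite eq_sym.
have cK : c \notin wedge c by rewrite inE eqxx andbF.
exists (double_star u c (wedge c)).
  exact: double_star_tree uc cK gp (wedge_separated cu ca).
move=> e /double_starP [z zu ->]; rewrite /parent; case: ifP => zK.
  by rewrite setUC hw.
apply/negP => /uonly; rewrite set22 => /(_ isT) /eq_set2 [[zu' _]|[za _]].
  by rewrite zu' eqxx in zu.
by move: zK; rewrite za a_in_wedge.
Qed.

Lemma wedge_not_mutual c1 c2 : c1 != a -> c2 != a ->
  c2 \in wedge c1 -> c1 \notin wedge c2.
Proof.
move=> c1a c2a; rewrite !inE (negbTE c1a) (negbTE c2a) /=.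
move=> /andP[/andP[c2u _] /andP[h1 h2]]; apply/negP => /andP[/andP[c1u _] /andP[h3 h4]].
have p1 := side_gt0 c1u c1a; have p2 := side_gt0 c2u c2a.
rewrite orientC23 in h4.
by case: (side_sign c1) (side_sign c2) => -> [] -> in h1 h2 h3 h4 p1 p2 *; lra.
Qed.

(* If each admissible c has a B-edge into its wedge, choosing one per c
   gives n - 2 distinct B-edges besides ua. *)
Lemma wedge_edges_card :
  (forall c, c != u -> c != a -> exists2 w, w \in wedge c & [set c; w] \in B) ->
  (n.-1 <= #|B|)%N.
Proof.
move=> hall.
pose g c := [set c; odflt c [pick w in wedge c | [set c; w] \in B]].
have gP c : c != u -> c != a ->
    exists2 w, w \in wedge c & g c = [set c; w] /\ [set c; w] \in B.
  move=> cu ca; rewrite /g; case: pickP => [w /andP[h1 h2]|h]; first by exists w.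
  by case: (hall c cu ca) => w h1 h2; have := h w; rewrite h1 h2.
pose C := [set c | (c != u) && (c != a)].
have g_inj : {in C &, injective g}.
  move=> c1 c2; rewrite !inE => /andP[c1u c1a] /andP[c2u c2a] e.
  case: (gP _ c1u c1a) => w1 w1K [e1 _]; case: (gP _ c2u c2a) => w2 w2K [e2 _].
  move: e; rewrite e1 e2 => /eq_set2 [[//]|[ec1 ec2]]; subst w1 w2.
  by have := wedge_not_mutual c1a c2a w1K; rewrite w2K.
have g_sub : g @: C \subset B :\ [set u; a].
  apply/subsetP => e /imsetP [c]; rewrite inE => /andP[cu ca] ->.
  case: (gP _ cu ca) => w _ [-> wB]; rewrite !inE wB andbT.
  by apply/eqP => /eq_set2 [] [hc _]; [rewrite hc eqxx in cu | rewrite hc eqxx in ca].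
have := subset_leq_card g_sub; rewrite card_in_imset //.
have hC : #|C| = #|~: [set u; a]| by apply: eq_card => x; rewrite !inE negb_or.
have := cardsC [set u; a]; rewrite card_ord cards2 ua hC.
rewrite (cardsD1 [set u; a] B) uaB /=.
by move: #|~: _| #|B :\ _| => x y; lia.
Qed.
End Degree1.

Lemma exists_avoiding_tree : B \subset complete_edges n -> (#|B| < n.-1)%N ->
  exists2 T, simple_trees_diam_le p 3 T & avoids T.
Proof.
move=> hB Bsmall; have [u] := exists_low_degree hB (leq_trans Bsmall (leq_pred n)).
rewrite leq_eqVlt ltnS leqn0 cards_eq0 => /orP[/cards1P [e0 he0]|/eqP]; last first.
  exact: avoiding_star.
have : e0 \in [set e in B | u \in e] by rewrite he0 set11.
rewrite inE => /andP[e0B ue0].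
have [a ua ea] : exists2 a, u != a & e0 = [set u; a].
  have := subsetP hB _ e0B; rewrite inE => /cards2P [x [y [xy exy]]].
  move: ue0; rewrite exy => /set2P [->|->]; first by exists y.
  by exists x; rewrite 1?eq_sym // setUC.
have uaB : [set u; a] \in B by rewrite -ea.
have uonly e : e \in B -> u \in e -> e = [set u; a].
  by move=> eB ue; rewrite -ea; apply/set1P; rewrite -he0 inE eB ue.
case: (boolP [exists c, [&& c != u, c != a &
    [forall w in wedge u a c, [set c; w] \notin B]]]).
  case/existsP => c /and3P[cu ca /forall_inP hw].
  by apply: (avoiding_wedge_star ua uonly cu ca) => w /hw.
rewrite negb_exists => /forallP hn; exfalso.
suff : (n.-1 <= #|B|)%N by rewrite leqNgt Bsmall.
apply: wedge_edges_card ua uaB _ => c cu ca.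
move: (hn c); rewrite cu ca /= negb_forall_in => /exists_inP [w wK].
by rewrite negbK => wB; exists w.
Qed.
End AvoidingTree.

Lemma blocks_trees_diam3_card (R : realFieldType) n (p : 'I_n -> R * R)
  (B : {set {set 'I_n}}) : general_position p -> (1 < n)%N ->
  B \subset complete_edges n -> blocks (simple_trees_diam_le p 3) B ->
  (n.-1 <= #|B|)%N.
Proof.
move=> gp n2 hB hbl; rewrite leqNgt; apply/negP => Bsmall.
have [T hT hTB] := exists_avoiding_tree gp n2 hB Bsmall.
have [e [eB eT]] := hbl T hT.
by have := hTB e eT; rewrite eB.
Qed.

Definition star n (v : 'I_n) : {set {set 'I_n}} := [set e in complete_edges n | v \in e].

Lemma star_sub n (v : 'I_n) : star v \subset complete_edges n.
Proof. by apply/subsetP => e; rewrite inE => /andP[]. Qed.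

Lemma card_star n (v : 'I_n) : (#|star v| <= n.-1)%N.
Proof.
have : star v \subset (fun y => [set v; y]) @: [set~ v].
  apply/subsetP => e; rewrite !inE => /andP[/cards2P [x [y [xy ->]]] /set2P[] ->].
    by apply/imsetP; exists y; rewrite ?inE // eq_sym.
  by apply/imsetP; exists x; rewrite ?inE // setUC.
move/subset_leq_card/leq_trans; apply; apply: leq_trans (leq_imset_card _ _) _.
by rewrite cardsC1 card_ord.
Qed.

Lemma connected_meets_star n (v : 'I_n) (T : {set {set 'I_n}}) : (1 < n)%N ->
  T \subset complete_edges n -> connected_graph T -> exists e, e \in star v /\ e \in T.
Proof.
move=> n2 Tc Tconn; have [w wv] := exists_other_vertex v n2.
case: (Tconn v w) => [[|y s] [/= + ls]]; first by rewrite -ls eqxx in wv.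
case/andP => vy _; exists [set v; y]; split => //.
by rewrite inE (subsetP Tc _ vy) set21.
Qed.

Lemma complete_edges_small n : (n <= 1)%N -> complete_edges n = set0.
Proof.
move=> n1; apply/setP => e; rewrite !inE; apply/negP => /eqP e2.
by have := max_card e; rewrite card_ord e2; lia.
Qed.

Theorem proposition1 (R : realFieldType) (n : nat) (p : 'I_n -> R * R)
  (p_inj : injective p) (p_gp : general_position p)
  (B : {set {set 'I_n}}) :
  blocker (simple_trees_diam_le p 3) B -> #|B| = (n - 1)%N.
Proof.
case=> hB [hbl hmin]; rewrite subn1.
have [n1|n2] := leqP n 1.
  by move: hB; rewrite complete_edges_small // subset0 => /eqP ->; rewrite cards0; lia.
pose v : 'I_n := Ordinal (ltnW n2).
have star_blocks : blocks (simple_trees_diam_le p 3) (star v).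
  by move=> T [[Tc [Tconn _]] _]; exact: connected_meets_star.
apply/eqP; rewrite eqn_leq (blocks_trees_diam3_card p_gp n2 hB hbl) andbT.
exact: leq_trans (hmin _ (star_sub v) star_blocks) (card_star v).
Qed.
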